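(* Let $D$, $S$, $\nu$, $\alpha_1,\alpha_2,r_1$, $\lambda$, $s$, the families $\mathcal{F}_i$, the points $z_{i,j}$, the functions $\phi_{i,j}$, the coefficients $\beta_{i,j}$ and the functions $g_i$ be as described in the context. For each sufficiently small $\eta > 0$ there are $m, r > 0$ with $0 < \lambda r < r_1$, such that for each $i$, $1 \leq i \leq 2s$, the following hold for the family of balls $\mathcal{F}_i$ (chosen for this $r$) and for the functions $g_i$ (defined with this $m$): (a) If a point $z \in S$ lies in no ball in $\mathcal{F}_i$, then $|g_i(z)| < \eta$. (b) If $z \in \overline{D} \cap \mathbb{B}(z_{i,j}, \lambda r)$ for some $j$, then $|g_i(z) - \beta_{i,j}\phi_{i,j}(z)| < \eta$. (c) If $z \in S \cap \mathbb{B}(z_{i,j}, r)$ for some $j$, then $|\phi_{i,j}(z)| \geq C\eta^{\frac{1}{16}}$, where the constant $C$ is independent of $r$, $m$ and $\eta$. (d) If $z \in \overline{D} \cap b\mathbb{B}(z_{i,j}, \lambda r)$ for some $j$, then $|\phi_{i,j}(z)| < \eta^{\frac{2}{3}}$. Moreover, we can choose $r > 0$ arbitrarily small and make $m > 0$ as large as we want.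
   Context: $D$ is a bounded strictly convex domain with $\mathcal{C}^2$-boundary in $\mathbb{C}^n$, $S = bD$ its boundary, and $\nu(w)$ the outward unit normal to $S$ at $w \in S$. $\langle\cdot,\cdot\rangle$, $\|\cdot\|$, $\mathrm{dist}$ denote the Hermitian inner product, norm and distance in $\mathbb{C}^n$, and $\mathbb{B}(a,r)$ the open ball of radius $r$ centered at $a$. The constants $\alpha_1, \alpha_2, r_1 > 0$ satisfy: $\Re\langle w - z, \nu(w)\rangle \geq \alpha_1\|z-w\|^2$ for all $w \in S$, $z \in \overline{D}$ with $\mathrm{dist}(z, bD) < r_1$, and $\Re\langle w - z, \nu(w)\rangle \leq \alpha_2\|z-w\|^2$ for all $z, w \in S$. Set $\lambda = 4\sqrt{\alpha_2/\alpha_1}$. The positive integer $s$ is such that for each $r > 0$ there are $s$ families of balls $\mathcal{F}_1, \dots, \mathcal{F}_s$, $\mathcal{F}_i = \{\mathbb{B}(z_{i,j}, \lambda r) : 1 \leq j \leq N_i\}$, with centers $z_{i,j} \in S$, such that the balls in each family are pairwise disjoint and $S \subset \bigcup_{i=1}^s\bigcup_{j=1}^{N_i}\mathbb{B}(z_{i,j}, r)$. For $1 \leq i \leq s$, $1\le j\le N_i$, set $z_{i+s,j} = z_{i,j}$ and $\mathcal{F}_{i+s} = \mathcal{F}_i$. For $m > 0$, $1 \leq i \leq 2s$, $1 \leq j \leq N_i$, define $\phi_{i,j}(z) = e^{-m\langle z_{i,j} - z, \nu(z_{i,j})\rangle}$, and for given complex numbers $\beta_{i,j}$ with $|\beta_{i,j}|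 \leq 1$ let $g_i(z) = \sum_{j=1}^{N_i}\beta_{i,j}\phi_{i,j}(z)$ (an entire function). *)

From HB Require Import structures.
From mathcomp Require Import all_boot all_order all_algebra.
From mathcomp Require Import complex.
From mathcomp Require Import all_classical all_reals all_analysis.
Set Implicit Arguments.
Unset Strict Implicit.
Unset Printing Implicit Defensive.
Import Order.TTheory GRing.Theory Num.Theory.
Import numFieldNormedType.Exports.
Local Open Scope classical_set_scope.
Local Open Scope ring_scope.
Local Open Scope complex_scope.

Notation Cn R n := ('rV[R]_n * 'rV[R]_n)%type.

Section Defs.
Variable R : realType.

(* C^n realified: z = (x, y) with complex coordinates z_k = x_k + i y_k.
   The product of two row spaces carries MathComp-Analysis' normed/topological
   structure (the product topology = the usual topology of C^n = R^(2n)). *)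

Variable n : nat.

Definition ccoord (z : Cn R n) (k : 'I_n) : R[i] := (z.1 0 k) +i* (z.2 0 k).

Definition hprod (z w : Cn R n) : R[i] := \sum_(k < n) ccoord z k * (ccoord w k)^*.

Definition hnorm (z : Cn R n) : R :=
  Num.sqrt (\sum_(k < n) ((z.1 0 k) ^+ 2 + (z.2 0 k) ^+ 2)).

Definition cabs (c : R[i]) : R := Num.sqrt (complex.Re c ^+ 2 + complex.Im c ^+ 2).

Definition cexp (c : R[i]) : R[i] :=
  (expR (complex.Re c) * cos (complex.Im c)) +i* (expR (complex.Re c) * sin (complex.Im c)).

Definition hball (a : Cn R n) (r : R) : set (Cn R n) := [set z | hnorm (z - a) < r].
Definition hsphere (a : Cn R n) (r : R) : set (Cn R n) := [set z | hnorm (z - a) = r].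

Definition bdry (A : set (Cn R n)) : set (Cn R n) := topology_structure.closure A `\` interior A.

Definition is_domain (D : set (Cn R n)) : Prop := D !=set0 /\ open D /\ connected D.

Definition hbounded (D : set (Cn R n)) : Prop := exists M : R, forall z, D z -> hnorm z <= M.

Definition convex_set_Cn (D : set (Cn R n)) : Prop :=
  forall x y, D x -> D y -> forall t : R, 0 <= t <= 1 -> D ((1 - t) *: x + t *: y).

Definition strictly_convex (D : set (Cn R n)) : Prop :=
  convex_set_Cn D /\
  forall x y, topology_structure.closure D x -> topology_structure.closure D y -> x != y ->
    forall t : R, 0 < t < 1 -> D ((1 - t) *: x + t *: y).

Definition C2_on (U : set (Cn R n)) (f : Cn R n -> R) : Prop :=
  (forall x, U x -> {for x, continuous f}) /\
  forall u v : Cn R n,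
    (forall x, U x -> derivable f x v /\ derivable ('D_v f) x u) /\
    (forall x, U x -> {for x, continuous ('D_v f)}) /\
    (forall x, U x -> {for x, continuous ('D_u ('D_v f))}).

Definition ex (k : 'I_n) : Cn R n := (delta_mx 0 k, 0).
Definition ey (k : 'I_n) : Cn R n := (0, delta_mx 0 k).

Definition grad (f : Cn R n -> R) (w : Cn R n) : Cn R n :=
  (\row_k derive f w (ex k), \row_k derive f w (ey k)).

Definition C2_boundary_outward_normal (D : set (Cn R n)) (nu : Cn R n -> Cn R n) : Prop :=
  exists (U : set (Cn R n)) (rho : Cn R n -> R),
    open U /\ bdry D `<=` U /\ C2_on U rho /\
    (forall x, U x -> (D x <-> rho x < 0)) /\
    (forall w, bdry D w -> grad rho w != 0 /\ nu w = (hnorm (grad rho w))^-1 *: grad rho w).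

Definition ball_families (S : set (Cn R n)) (s : nat) (lam r : R)
  (N : 'I_s -> nat) (zc : forall i : 'I_s, 'I_(N i) -> Cn R n) : Prop :=
  (forall i j, S (zc i j)) /\
  (forall i (j k : 'I_(N i)), j != k ->
     hball (zc i j) (lam * r) `&` hball (zc i k) (lam * r) = set0) /\
  (S `<=` [set z | exists i j, hball (zc i j) r z]).

Definition phi (nu : Cn R n -> Cn R n) (m : R) (c : Cn R n) (z : Cn R n) : R[i] :=
  cexp (- (m%:C) * hprod (c - z) (nu c)).

End Defs.

(* index i in 1..2s  |->  family index (i for i <= s, i - s otherwise),
   implementing z_{i+s,j} = z_{i,j}, F_{i+s} = F_i *)
Definition fold_idx (s : nat) (i : 'I_(s + s)%N) : 'I_s :=
  match fintype.split i with inl a => a | inr b => b end.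

(* Since |phi_{i,j}(z)| = exp(-m Re<z_{i,j} - z, nu(z_{i,j})>), the two convexity bounds
   alpha1 |z - w|^2 <= Re<w - z, nu(w)> <= alpha2 |z - w|^2 turn all four claims into Gaussian
   estimates.  Choose m and r with m alpha2 r^2 = u; as lambda^2 alpha1 = 16 alpha2, also
   m alpha1 (lambda r)^2 = 16 u.  Then |phi_{i,j}| >= e^(-u) on S inside B(z_{i,j}, r) and
   |phi_{i,j}| <= e^(-16 u) on the sphere of radius lambda r, which gives (c) and (d) once
   e^(-u) = C eta^(1/16).  For (a) and (b), every term of g_i whose centre is at distance at least
   lambda r from z is at most e^(1 - 16 u) exp(-(|z - z_{i,j}| / lambda r)^2).  The centres of one
   family are 2 lambda r-separated, so each cell of a grid of mesh lambda r / (n + 1) holds at most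
   one of them, and the sum of these Gaussians is bounded by a constant depending only on n. *)

From HB Require Import structures.
From mathcomp Require Import all_boot all_order all_algebra.
From mathcomp Require Import complex.
From mathcomp Require Import all_classical all_reals all_analysis.
From mathcomp Require Import ring lra zify.
Set Implicit Arguments.
Unset Strict Implicit.
Unset Printing Implicit Defensive.
Import Order.TTheory GRing.Theory Num.Theory.
Import numFieldNormedType.Exports.
Local Open Scope classical_set_scope.
Local Open Scope ring_scope.
Local Open Scope complex_scope.
Import ComplexField.Normc.

Section ComplexModulus.
Variable R : realType.

Lemma cabsE (c : R[i]) : cabs c = normc c.
Proof. by case: c. Qed.

Lemma cabs_ge0 (c : R[i]) : 0 <= cabs c.
Proof. exact: sqrtr_ge0. Qed.

Lemma cabsM (a b : R[i]) : cabs (a * b) = cabs a * cabs b.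
Proof. by rewrite !cabsE normcM. Qed.

Lemma cabs_sum (I : Type) (r : seq I) (P : pred I) (F : I -> R[i]) :
  cabs (\sum_(i <- r | P i) F i) <= \sum_(i <- r | P i) cabs (F i).
Proof.
apply: (big_ind2 (fun a b => cabs a <= b)) => //.
- by rewrite /cabs /= expr0n /= addr0 sqrtr0.
- move=> x1 x2 y1 y2 h1 h2; rewrite cabsE.
  by apply: le_trans (le_normcD _ _) _; rewrite -!cabsE lerD.
Qed.

Lemma cabs_cexp (c : R[i]) : cabs (cexp c) = expR (complex.Re c).
Proof.
rewrite /cabs /cexp /= !exprMn -mulrDr cos2Dsin2 mulr1.
by rewrite sqrtr_sqr ger0_norm // expR_ge0.
Qed.

End ComplexModulus.

Section HermitianNorm.
Variables (R : realType) (n : nat).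
Implicit Types (x y z a b : Cn R n) (c d : R).

Lemma hnorm_ge0 z : 0 <= hnorm z.
Proof. exact: sqrtr_ge0. Qed.

Lemma hnorm_sqr z : hnorm z ^+ 2 = \sum_(k < n) ((z.1 0 k) ^+ 2 + (z.2 0 k) ^+ 2).
Proof. by rewrite /hnorm sqr_sqrtr // sumr_ge0 // => k _; rewrite addr_ge0 ?sqr_ge0. Qed.

Lemma hnorm_scale c x y :
  (forall k, x.1 0 k = c * y.1 0 k /\ x.2 0 k = c * y.2 0 k) -> hnorm x = `|c| * hnorm y.
Proof.
move=> xcy; rewrite /hnorm -sqrtr_sqr -sqrtrM ?sqr_ge0 // mulr_sumr.
by congr Num.sqrt; apply: eq_bigr => k _; case: (xcy k) => -> ->; ring.
Qed.

Lemma hnorm_subrr z : hnorm (z - z) = 0.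
Proof. by rewrite (@hnorm_scale 0 _ z) ?normr0 ?mul0r // => k; rewrite /= !mxE !subrr !mul0r. Qed.

(* The midpoint of [a, b] lies in both balls unless they are far apart. *)
Lemma disjoint_hballs_sep a b d :
  hball a d `&` hball b d = set0 -> 2 * d <= hnorm (a - b).
Proof.
move=> ab0; rewrite leNgt; apply/negP => ab_lt.
pose x := (2^-1 : R) *: (a + b).
have xa : hnorm (x - a) = 2^-1 * hnorm (a - b).
  rewrite (@hnorm_scale (- 2^-1) _ (a - b)) ?normrN ?ger0_norm // => k.
  by rewrite /= !mxE; split; field.
have xb : hnorm (x - b) = 2^-1 * hnorm (a - b).
  rewrite (@hnorm_scale (2^-1) _ (a - b)) ?ger0_norm // => k.
  by rewrite /= !mxE; split; field.
have : (hball a d `&` hball b d) x by split; rewrite /hball /= ?xa ?xb; lra.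
by rewrite ab0.
Qed.

Lemma disjoint_hballs_le a b d z :
  hball a d `&` hball b d = set0 -> hball a d z -> d <= hnorm (z - b).
Proof.
move=> ab0 za; rewrite leNgt; apply/negP => zb.
have : (hball a d `&` hball b d) z by [].
by rewrite ab0.
Qed.

End HermitianNorm.

Section GridCounting.
Variable R : realType.
Local Close Scope classical_set_scope.

Lemma ler_sum_injective (I J : finType) (e : I -> J) (F : J -> R) :
  injective e -> (forall j, 0 <= F j) -> \sum_i F (e i) <= \sum_j F j.
Proof.
move=> e_inj F_ge0.
have -> : \sum_i F (e i) = \sum_(j in [set e i | i in [set: I]]) F j.
  rewrite big_imset /=; last by move=> i1 i2 _ _ /e_inj.
  by apply: eq_bigl => i; rewrite inE.
rewrite [X in _ <= X](bigID [in [set e i | i in [set: I]]]) /=.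
by rewrite lerDl sumr_ge0.
Qed.

Lemma geometric_sum_le (q : R) (B : nat) : 0 <= q < 1 -> \sum_(i < B) q ^+ i <= (1 - q)^-1.
Proof.
move=> /andP[q_ge0 q_lt1].
have sumE : (1 - q) * \sum_(i < B) q ^+ i = 1 - q ^+ B.
  by rewrite -opprB mulNr -subrX1 opprB.
rewrite -[X in _ <= X]mul1r ler_pdivlMr ?subr_gt0 // mulrC sumE.
by rewrite lerBlDr lerDl exprn_ge0.
Qed.

Lemma floor_eq_sqr_le1 (x y : R) : Num.floor x = Num.floor y -> (x - y) ^+ 2 <= 1.
Proof.
move=> xy; have /andP[x1 x2] := floor_itv x; have /andP[y1 y2] := floor_itv y.
rewrite xy intrD in x1 x2; rewrite intrD in y2.
move: x1 x2 y1 y2; set a := (Num.floor y)%:~R : R => x1 x2 y1 y2; nra.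
Qed.

Lemma expR_sqr_floor_le (K t : R) :
  expR (- (t / K) ^+ 2) <= expR (2 / K ^+ 2) * expR (- (K ^+ 2)^-1) ^+ `|Num.floor t|%N.
Proof.
rewrite -expRM_natl -expRD ler_expR expr_div_n.
have /andP[t1 t2] := floor_itv t; rewrite intrD in t2.
have abs_le : (`|Num.floor t|%N%:R : R) <= t ^+ 2 + 2.
  rewrite natr_absz intr_norm; move: t1 t2; set a := (Num.floor t)%:~R : R => t1 t2.
  by case: (leP 0 a) => a0; [rewrite ger0_norm | rewrite ltr0_norm]; nra.
have X_ge0 : 0 <= (K ^+ 2)^-1 by rewrite invr_ge0 sqr_ge0.
have := ler_wpM2r X_ge0 abs_le; rewrite mulrDl.
by move: (K ^+ 2)^-1 X_ge0 => X _; lra.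
Qed.

(* As 2 n < 4 (n + 1)^2, a cell of mesh d / (n + 1) in R^(2n) has diameter less than 2 d. *)
Lemma cell_diameter_lt (n : nat) (d h : R) : 0 < d -> 0 <= h ->
  h ^+ 2 <= n%:R * (2 * (d / n.+1%:R) ^+ 2) -> h < 2 * d.
Proof.
move=> d_gt0 h_ge0; rewrite ltNge; apply: contraTN => h_ge.
have e_gt0 : 0 < d / n.+1%:R by rewrite divr_gt0.
have dE : d = d / n.+1%:R * (n%:R + 1) by rewrite natr1 divfK.
move: (d / n.+1%:R) e_gt0 h_ge dE => e e_gt0 h_ge dE; rewrite dE in h_ge *.
have twod_ge0 : 0 <= 2 * (e * (n%:R + 1)) by rewrite mulr_ge0 // mulr_ge0 ?addr_ge0 // ltW.
have := ler_pM twod_ge0 twod_ge0 h_ge h_ge; rewrite -ltNge; nra.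
Qed.

Definition int_code (B : nat) (a : int) : bool * 'I_B.+1 := (a < 0, inord `|a|%N).

Lemma int_code_inj (B : nat) (a b : int) : (`|a| <= B)%N -> (`|b| <= B)%N ->
  int_code B a = int_code B b -> a = b.
Proof.
move=> aB bB [] ab_sgn /(congr1 val); rewrite /= !inordK ?ltnS // => ab_abs.
by move: ab_sgn; case: (ltP a 0); case: (ltP b 0) => // b0 a0 _; lia.
Qed.

Definition packing_const (n : nat) : R :=
  let K := n.+1%:R in
  ((2 * expR (2 / K ^+ 2) / (1 - expR (- (K ^+ 2)^-1))) ^+ 2) ^+ n.

Section GaussianPacking.
Variables (n N : nat) (p : 'I_N -> Cn R n) (z : Cn R n) (d : R).
Hypothesis d_gt0 : 0 < d.
Hypothesis p_sep : forall j k, j != k -> 2 * d <= hnorm (p j - p k).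

Let K : R := n.+1%:R.
Let q : R := expR (- (K ^+ 2)^-1).
Let c0 : R := expR (2 / K ^+ 2).

(* The cell of mesh d / K containing each real coordinate of z - p j. *)
Let cell1 j k := Num.floor ((z - p j).1 0 k * K / d).
Let cell2 j k := Num.floor ((z - p j).2 0 k * K / d).

Let B := (\max_(j < N) \max_(k < n) maxn `|cell1 j k| `|cell2 j k|)%N.

Local Notation code := (bool * 'I_B.+1)%type.

Let weight (x : code) : R := c0 * q ^+ x.2.

Let cells j : {ffun 'I_n -> code * code} :=
  [ffun k => (int_code B (cell1 j k), int_code B (cell2 j k))].

Let K_gt0 : 0 < K. Proof. by rewrite ltr0n. Qed.

Let q_itv : 0 <= q < 1.
Proof. by rewrite expR_ge0 /= -expR0 ltr_expR oppr_lt0 invr_gt0 exprn_gt0. Qed.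

Let cell_le_B j k : (`|cell1 j k| <= B)%N /\ (`|cell2 j k| <= B)%N.
Proof.
have cellB : (maxn `|cell1 j k| `|cell2 j k| <= B)%N.
  apply: leq_trans (leq_bigmax (F := fun k => maxn `|cell1 j k|%N `|cell2 j k|%N) k) _.
  exact: (leq_bigmax (F := fun j => \max_(k < n) maxn `|cell1 j k|%N `|cell2 j k|%N) j).
by rewrite !(leq_trans _ cellB) ?leq_maxl ?leq_maxr.
Qed.

Let gauss_le_weight j : expR (- (hnorm (z - p j) / d) ^+ 2) <=
  \prod_(k < n) (weight (cells j k).1 * weight (cells j k).2).
Proof.
have coordE (c : R) : c / d = c * K / d / K by rewrite mulrAC mulfK ?gt_eqF.
rewrite expr_div_n hnorm_sqr mulr_suml -sumrN expR_sum.
apply: ler_prod => k _; rewrite mulrDl opprD expRD mulr_ge0 ?expR_ge0 // ffunE.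
have [cell1_le cell2_le] := cell_le_B j k.
rewrite /weight /int_code /= !inordK ?ltnS // -!expr_div_n.
rewrite (coordE ((z - p j).1 0 k)) (coordE ((z - p j).2 0 k)).
by apply: ler_pM; rewrite ?expR_ge0 ?expR_sqr_floor_le.
Qed.

Let cells_inj : injective cells.
Proof.
move=> j l /ffunP jl; apply/eqP; apply: contraT => /p_sep.
have same_cell k : cell1 j k = cell1 l k /\ cell2 j k = cell2 l k.
  have := jl k; rewrite !ffunE => jlk.
  have [? ?] := cell_le_B j k; have [? ?] := cell_le_B l k.
  by split; [exact: int_code_inj (congr1 fst jlk) | exact: int_code_inj (congr1 snd jlk)].
have scaleE (c : R) : c = c * K / d * (d / K) by rewrite mulrA divfK ?mulfK ?gt_eqF.
have hnorm_le : hnorm (p j - p l) ^+ 2 <= n%:R * (2 * (d / K) ^+ 2).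
  rewrite hnorm_sqr; apply: le_trans (_ : _ <= \sum_(k < n) 2 * (d / K) ^+ 2) _.
    apply: ler_sum => k _.
    have [cell1_eq cell2_eq] := same_cell k.
    have := floor_eq_sqr_le1 (esym cell1_eq); have := floor_eq_sqr_le1 (esym cell2_eq).
    have -> : (p j - p l).1 0 k = ((z - p l).1 0 k * K / d - (z - p j).1 0 k * K / d) * (d / K).
      by rewrite mulrBl -!scaleE /= !mxE; ring.
    have -> : (p j - p l).2 0 k = ((z - p l).2 0 k * K / d - (z - p j).2 0 k * K / d) * (d / K).
      by rewrite mulrBl -!scaleE /= !mxE; ring.
    rewrite !exprMn -mulrDl => le2 le1.
    by apply: ler_wpM2r; [rewrite mulr_ge0 ?sqr_ge0 | lra].
  by rewrite sumr_const card_ord [in X in _ <= X]mulr_natl.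
by rewrite leNgt (cell_diameter_lt d_gt0 (hnorm_ge0 _) hnorm_le).
Qed.

Let weight_sum_le : \sum_(x : code) weight x <= 2 * c0 / (1 - q).
Proof.
rewrite -(pair_bigA _ (fun b (i : 'I_B.+1) => weight (b, i))) /= big_bool /=.
rewrite /weight /= -mulr_sumr -mulrA mulr2n mulrDl mul1r.
by apply: lerD; apply: ler_wpM2l; rewrite ?expR_ge0 ?geometric_sum_le.
Qed.

Lemma gaussian_packing : \sum_(j < N) expR (- (hnorm (z - p j) / d) ^+ 2) <= packing_const n.
Proof.
pose H (f : {ffun 'I_n -> code * code}) := \prod_(k < n) (weight (f k).1 * weight (f k).2).
have weight_ge0 x : 0 <= weight x by rewrite mulr_ge0 ?expR_ge0 ?exprn_ge0 //; case/andP: q_itv.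
apply: le_trans (ler_sum _ (fun j _ => gauss_le_weight j)) _.
apply: le_trans (@ler_sum_injective _ _ cells H cells_inj _) _.
  by move=> f; apply: prodr_ge0 => k _; apply: mulr_ge0.
have -> : \sum_f H f = \prod_(k < n) \sum_(x : code * code) weight x.1 * weight x.2.
  by rewrite bigA_distr_bigA.
rewrite /packing_const -/K -[in X in _ <= X](card_ord n) -prodr_const.
apply: ler_prod => k _; rewrite sumr_ge0 => [|x _]; last exact: mulr_ge0.
rewrite -(pair_bigA _ (fun u v => weight u * weight v)) /= -big_distrlr /= expr2.
by apply: ler_pM; rewrite ?sumr_ge0 ?weight_sum_le.
Qed.

End GaussianPacking.
End GridCounting.

Section PeakFunctions.
Variables (R : realType) (n : nat) (nu : Cn R n -> Cn R n).
Implicit Types (m b : R) (c z : Cn R n).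

Lemma cabs_phi m c z : cabs (phi nu m c z) = expR (- (m * complex.Re (hprod (c - z) (nu c)))).
Proof. by rewrite /phi cabs_cexp; case: (hprod _ _) => x y /=; congr expR; ring. Qed.

Lemma cabs_phi_ge m b c z : 0 <= m -> complex.Re (hprod (c - z) (nu c)) <= b ->
  expR (- (m * b)) <= cabs (phi nu m c z).
Proof. by move=> m_ge0 Re_le; rewrite cabs_phi ler_expR lerN2; apply: ler_wpM2l. Qed.

Lemma cabs_phi_le m b c z : 0 <= m -> b <= complex.Re (hprod (c - z) (nu c)) ->
  cabs (phi nu m c z) <= expR (- (m * b)).
Proof. by move=> m_ge0 Re_ge; rewrite cabs_phi ler_expR lerN2; apply: ler_wpM2l. Qed.

(* With L = m a dl^2 >= 1 and x = (|z - c| / dl)^2 >= 1, we have L x >= L + x - 1. *)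
Lemma cabs_phi_far_le m a dl c z : 0 <= m -> 0 < dl -> 1 <= m * a * dl ^+ 2 ->
  dl <= hnorm (z - c) -> a * hnorm (z - c) ^+ 2 <= complex.Re (hprod (c - z) (nu c)) ->
  cabs (phi nu m c z) <= expR (1 - m * a * dl ^+ 2) * expR (- (hnorm (z - c) / dl) ^+ 2).
Proof.
move=> m_ge0 dl_gt0 L_ge1 dl_le Re_ge; rewrite -expRD.
apply: le_trans (cabs_phi_le m_ge0 Re_ge) _; rewrite ler_expR.
have x_ge1 : 1 <= (hnorm (z - c) / dl) ^+ 2.
  by rewrite expr_div_n ler_pdivlMr ?exprn_gt0 // mul1r ler_pXn2r ?nnegrE ?hnorm_ge0 ?(ltW dl_gt0).
have -> : m * (a * hnorm (z - c) ^+ 2) = m * a * dl ^+ 2 * (hnorm (z - c) / dl) ^+ 2.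
  by field; rewrite gt_eqF.
nra.
Qed.

Section ConvexBoundary.
Variables (S Dc : set (Cn R n)) (alpha1 alpha2 r1 : R).
Hypothesis Re_ge : forall w z, S w -> Dc z -> (exists w', S w' /\ hnorm (z - w') < r1) ->
  alpha1 * hnorm (z - w) ^+ 2 <= complex.Re (hprod (w - z) (nu w)).
Hypothesis Re_le : forall z w, S z -> S w ->
  complex.Re (hprod (w - z) (nu w)) <= alpha2 * hnorm (z - w) ^+ 2.

Lemma cabs_phi_near_ge m r c z : 0 <= m -> 0 < alpha2 -> S c -> S z -> hnorm (z - c) < r ->
  expR (- (m * (alpha2 * r ^+ 2))) <= cabs (phi nu m c z).
Proof.
move=> m_ge0 alpha2_gt0 c_S z_S zc_lt; apply: cabs_phi_ge => //.
apply: le_trans (Re_le z_S c_S) _; rewrite ler_pM2l // ler_pXn2r ?nnegrE ?hnorm_ge0 ?ltW //.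
exact: le_lt_trans (hnorm_ge0 _) zc_lt.
Qed.

Lemma cabs_phi_sphere_le m dl c z : 0 <= m -> S c -> Dc z -> hnorm (z - c) = dl -> dl < r1 ->
  cabs (phi nu m c z) <= expR (- (m * alpha1 * dl ^+ 2)).
Proof.
move=> m_ge0 c_S z_Dc zc_eq dl_lt; rewrite -mulrA; apply: cabs_phi_le => //.
by rewrite -zc_eq; apply: Re_ge => //; exists c; rewrite zc_eq.
Qed.

Section Family.
Variables (N : nat) (p : 'I_N -> Cn R n) (beta : 'I_N -> R[i]) (m dl : R).
Hypotheses (m_ge0 : 0 <= m) (dl_gt0 : 0 < dl) (dl_lt_r1 : dl < r1).
Hypothesis L_ge1 : 1 <= m * alpha1 * dl ^+ 2.
Hypothesis p_disj : forall j k, j != k -> hball (p j) dl `&` hball (p k) dl = set0.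
Hypotheses (p_S : forall k, S (p k)) (beta_le1 : forall k, cabs (beta k) <= 1).

Let cabs_sum_far_le (Q : pred 'I_N) z :
  Dc z -> (exists w, S w /\ hnorm (z - w) < r1) -> (forall k, Q k -> dl <= hnorm (z - p k)) ->
  cabs (\sum_(k | Q k) beta k * phi nu m (p k) z) <=
    expR (1 - m * alpha1 * dl ^+ 2) * packing_const R n.
Proof.
move=> z_Dc z_near Q_far.
apply: le_trans (cabs_sum _ _ _) _.
apply: le_trans (_ : _ <= \sum_(k | Q k)
  expR (1 - m * alpha1 * dl ^+ 2) * expR (- (hnorm (z - p k) / dl) ^+ 2)) _.
  apply: ler_sum => k Qk; rewrite cabsM -[X in _ <= X]mul1r.
  by apply: ler_pM; rewrite ?cabs_ge0 ?beta_le1 ?cabs_phi_far_le ?Q_far ?Re_ge.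
rewrite -mulr_sumr ler_wpM2l ?expR_ge0 //.
have p_sep j k : j != k -> 2 * dl <= hnorm (p j - p k) by move/p_disj/disjoint_hballs_sep.
apply: le_trans (gaussian_packing z dl_gt0 p_sep).
by rewrite [X in _ <= X](bigID Q) /= lerDl sumr_ge0 // => k _; rewrite expR_ge0.
Qed.

Lemma cabs_sum_off_hballs_le z : S z -> Dc z -> (forall j, ~ hball (p j) dl z) ->
  cabs (\sum_j beta j * phi nu m (p j) z) <= expR (1 - m * alpha1 * dl ^+ 2) * packing_const R n.
Proof.
move=> z_S z_Dc z_out; apply: cabs_sum_far_le => //.
  by exists z; rewrite hnorm_subrr (lt_trans dl_gt0).
by move=> k _; rewrite leNgt; apply/negP => /z_out.
Qed.

Lemma cabs_sum_in_hball_le j z : Dc z -> hball (p j) dl z ->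
  cabs (\sum_k beta k * phi nu m (p k) z - beta j * phi nu m (p j) z) <=
    expR (1 - m * alpha1 * dl ^+ 2) * packing_const R n.
Proof.
move=> z_Dc z_in; rewrite (bigD1 j) //= addrC addrK.
apply: cabs_sum_far_le => // [|k kj]; first by exists (p j); split => //; apply: lt_trans dl_lt_r1.
by apply: disjoint_hballs_le z_in; apply: p_disj; rewrite eq_sym.
Qed.

End Family.
End ConvexBoundary.
End PeakFunctions.

Definition decay (R : realType) (P eta : R) : R := (P + 2 - ln eta) / 16.

Section Decay.
Variables (R : realType) (P eta : R).

Lemma decay_gt0 : 0 <= P -> 0 < eta < 1 -> 0 < decay P eta.
Proof. by move=> P_ge0 /ln_lt0 ln_lt0; rewrite /decay divr_gt0 //; lra. Qed.

Lemma one_le_16decay : 0 <= P -> 0 < eta < 1 -> 1 <= 16 * decay P eta.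
Proof. by move=> P_ge0 /ln_lt0 ln_lt0; rewrite /decay mulrC divfK //; lra. Qed.

Lemma expR_decay : 0 < eta -> expR (- decay P eta) = expR (- ((P + 2) / 16)) * eta `^ (1 / 16).
Proof. by move=> eta_gt0; rewrite /powR gt_eqF // -expRD; congr expR; rewrite /decay; field. Qed.

Lemma expR_16decay_lt : 0 <= P -> 0 < eta < 1 -> expR (- (16 * decay P eta)) < eta `^ (2 / 3).
Proof.
move=> P_ge0 eta_itv; have /andP[eta_gt0 _] := eta_itv; have := ln_lt0 eta_itv.
by rewrite /powR gt_eqF // ltr_expR /decay mulrC divfK //; lra.
Qed.

Lemma expR_16decay_tail_lt : 0 <= P -> 0 < eta -> expR (1 - 16 * decay P eta) * P < eta.
Proof.
move=> P_ge0 eta_gt0.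
have -> : 1 - 16 * decay P eta = ln eta - (P + 1) by rewrite /decay mulrC divfK //; lra.
rewrite expRD lnK ?posrE // -mulrA gtr_pMr // expRN mulrC ltr_pdivrMr ?expR_gt0 // mul1r.
by have := expR_ge1Dx (P + 1); lra.
Qed.

End Decay.

Lemma choose_scales (R : realType) (alpha2 r1 lambda u r0 M : R) :
  0 < alpha2 -> 0 < r1 -> 0 < lambda -> 0 < u -> 0 < r0 ->
  exists m r : R, M < m /\ 0 < r < r0 /\ lambda * r < r1 /\
  m * (alpha2 * r ^+ 2) = u /\ 0 < m.
Proof.
move=> alpha2_gt0 r1_gt0 lambda_gt0 u_gt0 r0_gt0.
have M1_gt0 : 0 < `|M| + 1 by rewrite ltr_pwDr.
pose r := Num.min (Num.min (r0 / 2) (r1 / (2 * lambda))) (Num.sqrt (u / (alpha2 * (`|M| + 1)))).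
have r_gt0 : 0 < r by rewrite !lt_min sqrtr_gt0 !divr_gt0 ?mulr_gt0.
have A_gt0 : 0 < alpha2 * r ^+ 2 by rewrite mulr_gt0 ?exprn_gt0.
have AM_le : alpha2 * r ^+ 2 * (`|M| + 1) <= u.
  have : r ^+ 2 <= u / (alpha2 * (`|M| + 1)).
    have U_ge0 : 0 <= u / (alpha2 * (`|M| + 1)) by rewrite divr_ge0 ?ltW ?mulr_gt0.
    rewrite -[X in _ <= X](sqr_sqrtr U_ge0).
    by rewrite ler_pXn2r ?nnegrE ?sqrtr_ge0 ?(ltW r_gt0) // ge_min lexx orbT.
  by rewrite ler_pdivlMr ?mulr_gt0 //; lra.
exists (u / (alpha2 * r ^+ 2)), r; do ![split].
- rewrite ltr_pdivlMr //; apply: lt_le_trans AM_le.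
  by rewrite mulrC ltr_pM2l //; have := ler_norm M; lra.
- by rewrite r_gt0 /= (le_lt_trans (_ : r <= r0 / 2)) ?ge_min ?lexx //; lra.
- have : r <= r1 / (2 * lambda) by rewrite !ge_min lexx orbT.
  by rewrite ler_pdivlMr ?mulr_gt0 // => r_le; nra.
- by rewrite mulrVK // unitfE gt_eqF.
- by rewrite divr_gt0.
Qed.

Lemma sqr_4sqrt_mul (R : realType) (a1 a2 : R) : 0 < a1 -> 0 <= a2 ->
  (4 * Num.sqrt (a2 / a1)) ^+ 2 * a1 = 16 * a2.
Proof.
move=> a1_gt0 a2_ge0; rewrite exprMn sqr_sqrtr ?divr_ge0 ?(ltW a1_gt0) //.
by field; rewrite gt_eqF.
Qed.

Theorem lemma2p3 (R : realType) (n : nat) (D : set (Cn R n))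
  (nu : Cn R n -> Cn R n) (alpha1 alpha2 r1 : R) (s : nat) :
  is_domain D -> hbounded D -> strictly_convex D ->
  C2_boundary_outward_normal D nu ->
  0 < alpha1 -> 0 < alpha2 -> 0 < r1 ->
  (* Re<w - z, nu(w)> >= alpha1 ||z - w||^2 for w in S, z in closure D, dist(z, bD) < r1 *)
  (forall w z, bdry D w -> topology_structure.closure D z ->
     (exists w', bdry D w' /\ hnorm (z - w') < r1) ->
     alpha1 * hnorm (z - w) ^+ 2 <= complex.Re (hprod (w - z) (nu w))) ->
  (* Re<w - z, nu(w)> <= alpha2 ||z - w||^2 for z, w in S *)
  (forall z w, bdry D z -> bdry D w ->
     complex.Re (hprod (w - z) (nu w)) <= alpha2 * hnorm (z - w) ^+ 2) ->
  (* the covering property defining s *)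
  (forall r : R, 0 < r -> exists (N : 'I_s -> nat) (zc : forall i : 'I_s, 'I_(N i) -> Cn R n),
     ball_families (bdry D) (4 * Num.sqrt (alpha2 / alpha1)) r zc) ->
  let lambda := 4 * Num.sqrt (alpha2 / alpha1) in
  exists C : R, 0 < C /\
  exists eta0 : R, 0 < eta0 /\
  forall eta : R, 0 < eta < eta0 ->
  (* moreover: r arbitrarily small and m arbitrarily large *)
  forall r0 M : R, 0 < r0 ->
  exists m r : R, M < m /\ 0 < r < r0 /\ lambda * r < r1 /\
  forall (N : 'I_s -> nat) (zc : forall i : 'I_s, 'I_(N i) -> Cn R n),
    ball_families (bdry D) lambda r zc ->
  forall beta : forall i : 'I_(s + s)%N, 'I_(N (fold_idx i)) -> R[i],
    (forall i j, cabs (beta i j) <= 1) ->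
  forall i : 'I_(s + s)%N,
    let g := fun z => \sum_(j < N (fold_idx i)) beta i j * phi nu m (zc (fold_idx i) j) z in
    (* (a) *)
    (forall z, bdry D z -> (forall j, ~ hball (zc (fold_idx i) j) (lambda * r) z) ->
       cabs (g z) < eta) /\
    (* (b) *)
    (forall j z, topology_structure.closure D z -> hball (zc (fold_idx i) j) (lambda * r) z ->
       cabs (g z - beta i j * phi nu m (zc (fold_idx i) j) z) < eta) /\
    (* (c) *)
    (forall j z, bdry D z -> hball (zc (fold_idx i) j) r z ->
       C * eta `^ (1 / 16) <= cabs (phi nu m (zc (fold_idx i) j) z)) /\
    (* (d) *)
    (forall j z, topology_structure.closure D z -> hsphere (zc (fold_idx i) j) (lambda * r) z ->
       cabs (phi nu m (zc (fold_idx i) j) z) < eta `^ (2 / 3)).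
Proof.
move=> _ _ _ _ alpha1_gt0 alpha2_gt0 r1_gt0 Re_ge Re_le _ lambda.
set P := packing_const R n; have P_ge0 : 0 <= P by rewrite exprn_ge0 ?sqr_ge0.
exists (expR (- ((P + 2) / 16))); split; first exact: expR_gt0.
exists 1; split => [|eta eta_itv r0 M r0_gt0]; first exact: ltr01.
have /andP[eta_gt0 _] := eta_itv.
have lambda_gt0 : 0 < lambda by rewrite mulr_gt0 // sqrtr_gt0 divr_gt0.
have [m [r [M_lt_m [/andP[r_gt0 r_lt_r0] [lr_lt_r1 [mr_decay m_gt0]]]]]] :=
  choose_scales M alpha2_gt0 r1_gt0 lambda_gt0 (decay_gt0 P_ge0 eta_itv) r0_gt0.
have L_eq : m * alpha1 * (lambda * r) ^+ 2 = 16 * decay P eta.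
  have -> : m * alpha1 * (lambda * r) ^+ 2 = m * (lambda ^+ 2 * alpha1) * r ^+ 2 by ring.
  by rewrite sqr_4sqrt_mul ?ltW // -mr_decay; ring.
have L_ge1 : 1 <= m * alpha1 * (lambda * r) ^+ 2 by rewrite L_eq one_le_16decay.
have lr_gt0 : 0 < lambda * r by rewrite mulr_gt0.
exists m, r; split => //; split; first by rewrite r_gt0.
split => // N zc [zc_S [zc_disj _]] beta beta_le1 i g.
have tail_lt := expR_16decay_tail_lt P_ge0 eta_gt0; rewrite -L_eq in tail_lt.
split; [|split; [|split]].
- move=> z z_S z_out; apply: le_lt_trans tail_lt.
  apply: (cabs_sum_off_hballs_le Re_ge (ltW m_gt0) lr_gt0 lr_lt_r1 L_ge1 (zc_disj _)) => //.
  by case: z_S.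
- move=> j z z_cl z_in; apply: le_lt_trans tail_lt.
  exact: (cabs_sum_in_hball_le Re_ge (ltW m_gt0) lr_gt0 lr_lt_r1 L_ge1 (zc_disj _)).
- move=> j z z_S z_in; rewrite -expR_decay // -mr_decay.
  by apply: (cabs_phi_near_ge Re_le) => //; exact: ltW.
- move=> j z z_cl z_sph; apply: le_lt_trans (expR_16decay_lt P_ge0 eta_itv).
  by rewrite -L_eq; apply: (cabs_phi_sphere_le Re_ge) => //; exact: ltW.
Qed.
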